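(* Let $ABCD$ be a convex quadrilateral in which no two opposite sides are parallel, and let $\omega_1$ be the circle with center $I_1$ and radius $r_1$ (so $\omega_1$ is tangent to the lines $AB$ and $CD$). If $\omega_1$ is also tangent to line $BC$ or to line $DA$, then $\omega_1$ is tangent to all four lines $AB,BC,CD,DA$ (so that $ABCD$ is tangential to $\omega_1$). Analogously, if the circle $\omega_2$ with center $I_2$ and radius $r_2$ is tangent to line $AB$ or line $CD$ in addition to lines $BC$ and $DA$, then $\omega_2$ is tangent to all four side lines.
   Context: Let $E$ be the intersection point of lines $AB$ and $DC$, and $F$ the intersection point of lines $AD$ and $BC$. Let $M,N$ be the midpoints of the diagonals $AC$ and $BD$; the line $MN$ is the Newton line. $I_1$ is the intersection point of the bisector line of the angle $\angle AED$ (the angle at $E$ between rays $EA$ and $ED$) with the line $MN$, and $r_1$ is the common distance from $I_1$ to the lines $AB$ and $CD$. $I_2$ is the intersection point of the bisector line of the angle $\angle AFB$ (the angle at $F$ between rays $FA$ and $FB$) with the line $MN$, and $r_2$ is the common distance from $I_2$ to the lines $BC$ and $DA$. It is assumed these intersections are single points. *)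

From Stdlib Require Import Reals.
Open Scope R_scope.

Definition point := (R * R)%type.

Definition vsub (P Q : point) : point := (fst P - fst Q, snd P - snd Q).
Definition vadd (P Q : point) : point := (fst P + fst Q, snd P + snd Q).
Definition vscale (k : R) (P : point) : point := (k * fst P, k * snd P).
Definition cross (u v : point) : R := fst u * snd v - snd u * fst v.
Definition vnorm (u : point) : R := sqrt (fst u * fst u + snd u * snd u).
Definition midpoint (P Q : point) : point := vscale (1/2) (vadd P Q).

Definition orient (P Q S : point) : R := cross (vsub Q P) (vsub S P).

(* P lies on the line through X and Y (X <> Y assumed where used) *)
Definition on_line (P X Y : point) : Prop := orient X Y P = 0.

Definition on_line_dir (P O w : point) : Prop := cross w (vsub P O) = 0.

Definition dist_line (P X Y : point) : R :=
  Rabs (cross (vsub Y X) (vsub P X)) / vnorm (vsub Y X).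

Definition bisector_dir (X O Y : point) : point :=
  vadd (vscale (/ vnorm (vsub X O)) (vsub X O))
       (vscale (/ vnorm (vsub Y O)) (vsub Y O)).

Definition on_bisector (P X O Y : point) : Prop :=
  on_line_dir P O (bisector_dir X O Y).

Definition convex_quad (A B C D : point) : Prop :=
  (0 < orient A B C /\ 0 < orient B C D /\ 0 < orient C D A /\ 0 < orient D A B) \/
  (orient A B C < 0 /\ orient B C D < 0 /\ orient C D A < 0 /\ orient D A B < 0).

Definition parallel (X Y Z W : point) : Prop := cross (vsub Y X) (vsub W Z) = 0.

Definition tangent_line (O : point) (r : R) (X Y : point) : Prop :=
  dist_line O X Y = r.

From Stdlib Require Import Reals Lra.
Open Scope R_scope.

(* Put E at the origin with unit vectors a, d along the rays EA, ED: then A, B sit at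
   parameters al, be on a, the points C, D at ga, de on d, and the bisector point is
   J = la (a + d), at distance |la (a x d)| from both AB and CD.  J has that same distance
   from the transversal through s a and t d iff s t Q(s, t) = 0, where
   Q(s, t) = s t - 2 la (s + t) + 2 la^2 (1 + a.d); and J lies on the Newton line exactly
   when Q(al, de) = Q(be, ga).  Hence J is equidistant from BC iff it is from DA.  The
   statement about I2 is the same fact for the quadrilateral ADCB. *)

Definition nsq (u : point) : R := fst u * fst u + snd u * snd u.
Definition dot (u v : point) : R := fst u * fst v + snd u * snd v.

Lemma vnorm_nsq (u : point) : vnorm u = sqrt (nsq u).
Proof. reflexivity. Qed.

Lemma nsq_le0 (u : point) : nsq u <= 0 -> fst u = 0 /\ snd u = 0.
Proof.
  unfold nsq; intro Hle.
  assert (Hx : fst u * fst u = 0) by nra; assert (Hy : snd u * snd u = 0) by nra.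
  split; [apply (Rsqr_0_uniq (fst u)) | apply (Rsqr_0_uniq (snd u))]; assumption.
Qed.

Lemma nsq_pos_of_cross_neq0 (u v : point) : cross u v <> 0 -> 0 < nsq v.
Proof.
  intro Huv; destruct (Rle_lt_dec (nsq v) 0) as [Hle|]; [|assumption].
  destruct (nsq_le0 v Hle) as [Hx Hy].
  exfalso; apply Huv; unfold cross; rewrite Hx, Hy; ring.
Qed.

Lemma nsq_pos_of_neq (X Y : point) : X <> Y -> 0 < nsq (vsub X Y).
Proof.
  intro Hne; destruct (Rle_lt_dec (nsq (vsub X Y)) 0) as [Hle|]; [|assumption].
  destruct (nsq_le0 _ Hle) as [Hx Hy]; destruct X, Y; simpl in Hx, Hy.
  exfalso; apply Hne; f_equal; lra.
Qed.

Lemma orient_cycle (X Y Z : point) : orient X Y Z = orient Y Z X.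
Proof. unfold orient, cross, vsub; simpl; ring. Qed.

Lemma orient_swap (X Y Z : point) : orient Y X Z = - orient X Y Z.
Proof. unfold orient, cross, vsub; simpl; ring. Qed.

Lemma orient_rev (X Y Z : point) : orient X Y Z = - orient Z Y X.
Proof. unfold orient, cross, vsub; simpl; ring. Qed.

Lemma midpoint_comm (X Y : point) : midpoint X Y = midpoint Y X.
Proof. unfold midpoint, vscale, vadd; simpl; f_equal; ring. Qed.

Lemma dist_line_sym (P X Y : point) : dist_line P X Y = dist_line P Y X.
Proof.
  unfold dist_line; rewrite !vnorm_nsq.
  replace (cross (vsub X Y) (vsub P Y)) with (- cross (vsub Y X) (vsub P X))
    by (unfold cross, vsub; simpl; ring).
  replace (nsq (vsub X Y)) with (nsq (vsub Y X)) by (unfold nsq, vsub; simpl; ring).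
  now rewrite Rabs_Ropp.
Qed.

Lemma cross_eq0_scale (u v : point) :
  0 < nsq u -> cross u v = 0 -> exists t, v = vscale t u.
Proof.
  destruct u as [u1 u2], v as [v1 v2]; unfold nsq, cross, vscale; simpl; intros Hu Huv.
  exists ((u1 * v1 + u2 * v2) / (u1 * u1 + u2 * u2)).
  assert (H1 : u2 * (u1 * v2 - u2 * v1) = 0) by (rewrite Huv; ring).
  assert (H2 : u1 * (u1 * v2 - u2 * v1) = 0) by (rewrite Huv; ring).
  f_equal; field_simplify_eq; lra.
Qed.

Lemma on_line_dir_ray (P O w : point) :
  0 < nsq w -> on_line_dir P O w -> exists t, P = vadd O (vscale t w).
Proof.
  intros Hw HP; destruct (cross_eq0_scale _ _ Hw HP) as [t Ht].
  exists t; rewrite <- Ht; destruct O, P; unfold vadd, vsub; simpl; f_equal; ring.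
Qed.

Lemma nsq_normalize (u : point) : 0 < nsq u -> nsq (vscale (/ vnorm u) u) = 1.
Proof.
  intro Hu; rewrite vnorm_nsq.
  assert (Hs : sqrt (nsq u) * sqrt (nsq u) = nsq u) by (apply sqrt_sqrt; lra).
  assert (Hs0 : sqrt (nsq u) <> 0) by (apply Rgt_not_eq, sqrt_lt_R0, Hu).
  transitivity (nsq u / (sqrt (nsq u) * sqrt (nsq u)));
    [unfold nsq, vscale; simpl; field; exact Hs0 | rewrite Hs; field; lra].
Qed.

Lemma dist_line_along (P O u : point) (s t : R) :
  nsq u = 1 -> s <> t ->
  dist_line P (vadd O (vscale s u)) (vadd O (vscale t u)) = Rabs (cross u (vsub P O)).
Proof.
  intros Hu Hst; unfold dist_line; rewrite vnorm_nsq.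
  replace (cross _ _) with ((t - s) * cross u (vsub P O))
    by (unfold cross, vsub, vadd, vscale; simpl; ring).
  replace (nsq _) with (Rsqr (t - s))
    by (unfold Rsqr; transitivity ((t - s) * (t - s) * nsq u);
        [rewrite Hu; ring | unfold nsq, vsub, vadd, vscale; simpl; ring]).
  rewrite sqrt_Rsqr_abs, Rabs_mult.
  field; apply Rabs_no_R0; lra.
Qed.

Lemma dist_line_eq_Rabs_iff (P X Y : point) (r : R) :
  0 < nsq (vsub Y X) ->
  dist_line P X Y = Rabs r <->
  cross (vsub Y X) (vsub P X) ^ 2 = r ^ 2 * nsq (vsub Y X).
Proof.
  intro Hn; unfold dist_line; rewrite vnorm_nsq.
  set (x := cross _ _); set (n := nsq _) in Hn |- *.
  rewrite <- (sqrt_Rsqr_abs x), <- (sqrt_Rsqr_abs r), <- sqrt_div_alt by exact Hn.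
  unfold Rsqr; split; intro H.
  - apply sqrt_inj in H; [| apply Rmult_le_pos, Rlt_le, Rinv_0_lt_compat; nra .. | nra].
    field_simplify in H; [| lra]. apply (Rmult_eq_compat_r n) in H.
    field_simplify in H; [| lra]. lra.
  - f_equal. field_simplify_eq; [lra | lra].
Qed.

Section BisectorFrame.

Variables (O a d : point) (la : R).
Hypotheses (unit_a : nsq a = 1) (unit_d : nsq d = 1) (cross_ad : cross a d <> 0).

Let ray (t : R) (u : point) : point := vadd O (vscale t u).
Let J : point := vadd O (vscale la (vadd a d)).

Definition tangency_form (s t : R) : R :=
  s * t - 2 * la * (s + t) + 2 * la ^ 2 * (1 + dot a d).

Lemma dist_bisector_ray_a (s t : R) :
  s <> t -> dist_line J (ray s a) (ray t a) = Rabs (la * cross a d).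
Proof.
  intro Hst; unfold ray; rewrite dist_line_along by assumption.
  f_equal; unfold J, cross, vsub, vadd, vscale; simpl; ring.
Qed.

Lemma dist_bisector_ray_d (s t : R) :
  s <> t -> dist_line J (ray s d) (ray t d) = Rabs (la * cross a d).
Proof.
  intro Hst; unfold ray; rewrite dist_line_along by assumption.
  rewrite <- Rabs_Ropp; f_equal; unfold J, cross, vsub, vadd, vscale; simpl; ring.
Qed.

Lemma dist_bisector_transversal (s t : R) :
  s <> 0 -> t <> 0 ->
  dist_line J (ray s a) (ray t d) = Rabs (la * cross a d) <-> tangency_form s t = 0.
Proof.
  intros Hs Ht.
  assert (Hpos : 0 < nsq (vsub (ray t d) (ray s a))).
  { apply (nsq_pos_of_cross_neq0 a).
    replace (cross _ _) with (t * cross a d)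
      by (unfold ray, cross, vsub, vadd, vscale; simpl; ring).
    now apply Rmult_integral_contrapositive_currified. }
  rewrite dist_line_eq_Rabs_iff by exact Hpos.
  replace (cross _ _) with (cross a d * (s * t - la * (s + t)))
    by (unfold J, ray, cross, vsub, vadd, vscale; simpl; ring).
  replace (nsq _) with (s ^ 2 + t ^ 2 - 2 * s * t * dot a d)
    by (transitivity (s ^ 2 * nsq a + t ^ 2 * nsq d - 2 * s * t * dot a d);
        [rewrite unit_a, unit_d; ring | unfold ray, nsq, dot, vsub, vadd, vscale; simpl; ring]).
  assert (Hid : (cross a d * (s * t - la * (s + t))) ^ 2
                - (la * cross a d) ^ 2 * (s ^ 2 + t ^ 2 - 2 * s * t * dot a d)
                = cross a d ^ 2 * (s * t) * tangency_form s t)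
    by (unfold tangency_form; ring).
  assert (Hnz : cross a d ^ 2 * (s * t) <> 0)
    by (repeat apply Rmult_integral_contrapositive_currified; auto using pow_nonzero).
  split; intro H.
  - apply (Rmult_eq_reg_l (cross a d ^ 2 * (s * t))); [lra | exact Hnz].
  - rewrite H, Rmult_0_r in Hid; lra.
Qed.

Lemma newton_line_tangency_form (al be ga de : R) :
  on_line J (midpoint (ray al a) (ray ga d)) (midpoint (ray be a) (ray de d)) ->
  tangency_form al de = tangency_form be ga.
Proof.
  unfold on_line; intro HN.
  assert (Hid : 4 * orient (midpoint (ray al a) (ray ga d)) (midpoint (ray be a) (ray de d)) J
                = cross a d * (tangency_form al de - tangency_form be ga))
    by (unfold tangency_form, orient, midpoint, J, ray, cross, vsub, vadd, vscale; simpl;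
        field).
  rewrite HN, Rmult_0_r in Hid.
  symmetry in Hid; apply Rmult_integral in Hid as [|]; [contradiction | lra].
Qed.

Lemma ray_quad_equidistance (A B C D P : point) (al be ga de : R) :
  A = ray al a -> B = ray be a -> C = ray ga d -> D = ray de d -> P = J ->
  al <> 0 -> be <> 0 -> ga <> 0 -> de <> 0 -> al <> be -> ga <> de ->
  on_line P (midpoint A C) (midpoint B D) ->
  dist_line P C D = dist_line P A B /\
  (dist_line P B C = dist_line P A B <-> dist_line P D A = dist_line P A B).
Proof.
  intros -> -> -> -> -> Hal Hbe Hga Hde Hab Hgd HN.
  rewrite dist_bisector_ray_a, dist_bisector_ray_d, (dist_line_sym _ (ray de d)) by assumption.
  rewrite !dist_bisector_transversal by assumption.
  rewrite (newton_line_tangency_form _ _ _ _ HN).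
  split; reflexivity.
Qed.

End BisectorFrame.

Lemma ray_quad_nondegenerate (A D E : point) (b g : R) :
  let B := vadd E (vscale b (vsub A E)) in
  let C := vadd E (vscale g (vsub D E)) in
  orient A B C <> 0 -> orient B C D <> 0 -> orient C D A <> 0 -> orient D A B <> 0 ->
  b <> 0 /\ b <> 1 /\ g <> 0 /\ g <> 1 /\ cross (vsub A E) (vsub D E) <> 0.
Proof.
  intros B C HABC HBCD HCDA HDAB; set (X := cross (vsub A E) (vsub D E)).
  replace (orient A B C) with ((b - 1) * g * X) in HABC
    by (unfold B, C, X, orient, cross, vsub, vadd, vscale; simpl; ring).
  replace (orient B C D) with (b * (g - 1) * X) in HBCD
    by (unfold B, C, X, orient, cross, vsub, vadd, vscale; simpl; ring).
  replace (orient C D A) with ((g - 1) * X) in HCDA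
    by (unfold C, X, orient, cross, vsub, vadd, vscale; simpl; ring).
  replace (orient D A B) with ((b - 1) * X) in HDAB
    by (unfold B, X, orient, cross, vsub, vadd, vscale; simpl; ring).
  apply Rmult_neq_0_reg in HABC as [HABC _]; apply Rmult_neq_0_reg in HABC as [_ Hg].
  apply Rmult_neq_0_reg in HBCD as [HBCD _]; apply Rmult_neq_0_reg in HBCD as [Hb _].
  apply Rmult_neq_0_reg in HCDA as [Hg1 HX].
  apply Rmult_neq_0_reg in HDAB as [Hb1 _].
  repeat split; lra || assumption.
Qed.

Lemma bisector_newton_equidistance (A B C D E J : point) :
  orient A B C <> 0 -> orient B C D <> 0 -> orient C D A <> 0 -> orient D A B <> 0 ->
  on_line E A B -> on_line E D C -> on_bisector J A E D ->
  on_line J (midpoint A C) (midpoint B D) ->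
  dist_line J C D = dist_line J A B /\
  (dist_line J B C = dist_line J A B <-> dist_line J D A = dist_line J A B).
Proof.
  intros HABC HBCD HCDA HDAB HEAB HEDC Hbis HN.
  assert (HA : 0 < nsq (vsub A E)).
  { apply nsq_pos_of_neq; intros ->; apply HCDA.
    unfold on_line in HEDC; rewrite orient_swap, HEDC; ring. }
  assert (HD : 0 < nsq (vsub D E)).
  { apply nsq_pos_of_neq; intros ->; apply HDAB.
    unfold on_line in HEAB; rewrite orient_cycle; exact HEAB. }
  destruct (on_line_dir_ray B E (vsub A E) HA) as [b HB];
    [change (orient E A B = 0); rewrite orient_cycle; exact HEAB|].
  destruct (on_line_dir_ray C E (vsub D E) HD) as [g HC];
    [change (orient E D C = 0); rewrite orient_cycle; exact HEDC|].
  subst B C.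
  destruct (ray_quad_nondegenerate A D E b g HABC HBCD HCDA HDAB)
    as (Hb0 & Hb1 & Hg0 & Hg1 & HX).
  set (p := vnorm (vsub A E)) in Hbis; set (q := vnorm (vsub D E)) in Hbis.
  assert (Hp : p <> 0) by (apply Rgt_not_eq, sqrt_lt_R0, HA).
  assert (Hq : q <> 0) by (apply Rgt_not_eq, sqrt_lt_R0, HD).
  set (a := vscale (/ p) (vsub A E)) in Hbis; set (d := vscale (/ q) (vsub D E)) in Hbis.
  assert (Hcross : cross a d <> 0).
  { replace (cross a d) with (/ p * / q * cross (vsub A E) (vsub D E))
      by (unfold a, d, cross, vscale; simpl; ring).
    repeat apply Rmult_integral_contrapositive_currified; auto using Rinv_neq_0_compat. }
  destruct (on_line_dir_ray J E (vadd a d)) as [la HJ]; [|exact Hbis|].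
  { apply (nsq_pos_of_cross_neq0 a).
    replace (cross _ _) with (cross a d) by (unfold cross, vadd; simpl; ring).
    exact Hcross. }
  apply (ray_quad_equidistance E a d la (nsq_normalize _ HA) (nsq_normalize _ HD) Hcross
           _ _ _ _ _ p (b * p) (g * q) q); auto.
  1-4: apply injective_projections; unfold a, d, vadd, vscale, vsub; simpl; field; assumption.
  - intro Heq; apply Hb1, (Rmult_eq_reg_r p); lra.
  - intro Heq; apply Hg1, (Rmult_eq_reg_r q); lra.
Qed.

Lemma convex_quad_orient_neq0 (A B C D : point) :
  convex_quad A B C D ->
  orient A B C <> 0 /\ orient B C D <> 0 /\ orient C D A <> 0 /\ orient D A B <> 0.
Proof. intros [H | H]; repeat split; lra. Qed.

Lemma convex_quad_rev (A B C D : point) : convex_quad A B C D -> convex_quad A D C B.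
Proof.
  unfold convex_quad.
  rewrite (orient_rev A D C), (orient_rev D C B), (orient_rev C B A), (orient_rev B A D).
  intros [H | H]; [right | left]; lra.
Qed.

Theorem theorem4 (A B C D E F I1 I2 : point) :
  convex_quad A B C D ->
  ~ parallel A B D C ->
  ~ parallel A D B C ->
  (* E = AB ∩ DC, F = AD ∩ BC *)
  on_line E A B -> on_line E D C ->
  on_line F A D -> on_line F B C ->
  (* I1 = the unique intersection of the bisector of angle AED with the Newton line MN *)
  on_bisector I1 A E D -> on_line I1 (midpoint A C) (midpoint B D) ->
  (forall P, on_bisector P A E D -> on_line P (midpoint A C) (midpoint B D) -> P = I1) ->
  (* I2 = the unique intersection of the bisector of angle AFB with MN *)
  on_bisector I2 A F B -> on_line I2 (midpoint A C) (midpoint B D) ->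
  (forall P, on_bisector P A F B -> on_line P (midpoint A C) (midpoint B D) -> P = I2) ->
  let r1 := dist_line I1 A B in
  let r2 := dist_line I2 B C in
  ((tangent_line I1 r1 B C \/ tangent_line I1 r1 D A) ->
     tangent_line I1 r1 A B /\ tangent_line I1 r1 B C /\
     tangent_line I1 r1 C D /\ tangent_line I1 r1 D A) /\
  ((tangent_line I2 r2 A B \/ tangent_line I2 r2 C D) ->
     tangent_line I2 r2 A B /\ tangent_line I2 r2 B C /\
     tangent_line I2 r2 C D /\ tangent_line I2 r2 D A).
Proof.
  intros Hcv _ _ HEAB HEDC HFAD HFBC Hbis1 HN1 _ Hbis2 HN2 _ r1 r2.
  unfold tangent_line, r1, r2.
  destruct (convex_quad_orient_neq0 _ _ _ _ Hcv) as (HABC & HBCD & HCDA & HDAB).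
  split.
  - destruct (bisector_newton_equidistance A B C D E I1 HABC HBCD HCDA HDAB
                HEAB HEDC Hbis1 HN1) as [HCD HBC_DA].
    rewrite HCD; intuition.
  - rewrite (midpoint_comm B D) in HN2.
    destruct (convex_quad_orient_neq0 _ _ _ _ (convex_quad_rev _ _ _ _ Hcv))
      as (HADC & HDCB & HCBA & HBAD).
    destruct (bisector_newton_equidistance A D C B F I2 HADC HDCB HCBA HBAD
                HFAD HFBC Hbis2 HN2) as [HCB HDC_BA].
    rewrite (dist_line_sym I2 C B), (dist_line_sym I2 D C), (dist_line_sym I2 B A) in *.
    rewrite HCB, (dist_line_sym I2 D A); intuition.
Qed.
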